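(* Let $A$ and $B$ be real $n\times n$ matrices, and suppose there exists a real $n\times n$ matrix $X$ such that $AB-BA\geq I-X$ (entrywise). Then: (i) $\operatorname{tr}(X)\geq n$; (ii) $r(X)\geq1$, and consequently $\|X\|\geq1$ for the operator norm induced by any norm on $\mathbb R^n$; (iii) if $X$ is idempotent ($X^2=X$), then $X=I$.
   Context: Real $n\times n$ matrices are ordered entrywise: $X\leq Y$ means $x_{ij}\leq y_{ij}$ for all $i,j$. $I$ is the $n\times n$ identity matrix, $\operatorname{tr}$ the trace, and $r(X)$ the spectral radius of $X$ (maximum modulus of its complex eigenvalues). *)

From HB Require Import structures.
From mathcomp Require Import all_boot all_order all_algebra.
From mathcomp Require Import classical_sets reals.
From mathcomp.real_closed Require Import complex.
Set Implicit Arguments. Unset Strict Implicit. Unset Printing Implicit Defensive.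
Import Order.TTheory GRing.Theory Num.Theory.
Local Open Scope ring_scope.
Local Open Scope classical_set_scope.

Definition cmod (R : rcfType) (z : R[i]) : R :=
  Num.sqrt (complex.Re z ^+ 2 + complex.Im z ^+ 2).

Definition complex_eigenvalue (R : rcfType) (n : nat) (X : 'M[R]_n) (l : R[i]) : Prop :=
  eigenvalue (map_mx (fun x : R => (x%:C)%C) X) l.

Definition spectral_radius (R : realType) (n : nat) (X : 'M[R]_n) : R :=
  sup [set cmod l | l in [set l | complex_eigenvalue X l]].

Definition is_vnorm (R : realType) (n : nat) (N : 'cV[R]_n -> R) : Prop :=
  [/\ forall v, 0 <= N v,
      forall v, N v = 0 -> v = 0,
      forall (a : R) v, N (a *: v) = `|a| * N v
    & forall u v, N (u + v) <= N u + N v].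

Definition opnorm (R : realType) (n : nat) (N : 'cV[R]_n -> R) (X : 'M[R]_n) : R :=
  sup [set N (X *m v) | v in [set v | N v <= 1]].

From HB Require Import structures.
From mathcomp Require Import all_boot all_order all_algebra.
From mathcomp Require Import classical_sets reals.
From mathcomp.real_closed Require Import complex.
From mathcomp Require Import boolp topology normedtype derive.
From mathcomp Require Import lra ring.
Import Order.TTheory GRing.Theory Num.Theory.
Import numFieldNormedType.Exports.
Set Implicit Arguments. Unset Strict Implicit. Unset Printing Implicit Defensive.
Local Open Scope ring_scope.
Local Open Scope classical_set_scope.

(* Since tr (A B - B A) = 0, summing the diagonal of A B - B A >= I - X gives
   tr X >= n.  The n complex eigenvalues of X add up to tr X, so one of them,
   l, has Re l >= 1, whence |l| >= 1 bounds the spectral radius.  If u + i v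
   is an eigenvector for l, then X acts on span(u, v) as |l| times a rotation;
   the supremum of N over the ellipse {p u + r v | p^2 + r^2 = 1} is thus
   multiplied by |l| under X, which forces ||X|| >= |l|.  Finally, the
   eigenvalues of an idempotent are 0 or 1, so tr X >= n forces them all to
   be 1: X is then invertible, and X^2 = X gives X = I. *)

Section ComplexMatrix.
Variable R : rcfType.
Local Notation toC := (fun x : R => x%:C%C).

Lemma Re_sum I (r : seq I) (F : I -> R[i]) :
  complex.Re (\sum_(i <- r) F i) = \sum_(i <- r) complex.Re (F i).
Proof. exact: (raddf_sum (@complex.Re R : Rcomplex R -> R)). Qed.

Lemma Im_sum I (r : seq I) (F : I -> R[i]) :
  complex.Im (\sum_(i <- r) F i) = \sum_(i <- r) complex.Im (F i).
Proof. exact: (raddf_sum (@complex.Im R : Rcomplex R -> R)). Qed.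

Lemma Re_mul (l z : R[i]) :
  complex.Re (l * z) = complex.Re l * complex.Re z - complex.Im l * complex.Im z.
Proof. by case: l; case: z. Qed.

Lemma Im_mul (l z : R[i]) :
  complex.Im (l * z) = complex.Re l * complex.Im z + complex.Im l * complex.Re z.
Proof. by case: l; case: z. Qed.

Lemma map_Re_mulmx m k p (X : 'M[R]_(m, k)) (w : 'M[R[i]]_(k, p)) :
  map_mx (@complex.Re R) (map_mx toC X *m w) = X *m map_mx (@complex.Re R) w.
Proof.
apply/matrixP => i j; rewrite !mxE Re_sum.
by apply: eq_bigr => l _; rewrite !mxE Re_mul /= mul0r subr0.
Qed.

Lemma map_Im_mulmx m k p (X : 'M[R]_(m, k)) (w : 'M[R[i]]_(k, p)) :
  map_mx (@complex.Im R) (map_mx toC X *m w) = X *m map_mx (@complex.Im R) w.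
Proof.
apply/matrixP => i j; rewrite !mxE Im_sum.
by apply: eq_bigr => l _; rewrite !mxE Im_mul /= mul0r addr0.
Qed.

Lemma Re_le_cmod (z : R[i]) : complex.Re z <= cmod z.
Proof.
apply: le_trans (ler_norm _) _; rewrite -sqrtr_sqr.
by apply: ler_wsqrtr; rewrite lerDl sqr_ge0.
Qed.

(* [eigenvalue] refers to row eigenvectors, so column eigenvectors of X come
   from the eigenvalues of its transpose. *)
Lemma eigenvector_of_complex_eigenvalue_tr n (X : 'M[R]_n) l :
  complex_eigenvalue X^T l ->
  exists2 w : 'cV[R[i]]_n, map_mx toC X *m w = l *: w & w != 0.
Proof.
case/eigenvalueP=> w wX w0; exists w^T; last by rewrite trmx_eq0.
by rewrite -[X]trmxK -map_trmx -trmx_mul wX linearZ.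
Qed.

End ComplexMatrix.

Lemma closed_char_roots (C : closedFieldType) n (A : 'M[C]_n.+1) :
  exists rs : seq C, [/\ size rs = n.+1, \sum_(r <- rs) r = \tr A &
    forall l, eigenvalue A l <-> l \in rs].
Proof.
have [rs charA] := closed_field_poly_normal (char_poly A).
rewrite (monicP (char_poly_monic A)) scale1r in charA.
have size_rs : size rs = n.+1.
  by have := size_char_poly A; rewrite charA size_prod_XsubC; case.
exists rs; split=> // [|l]; last by rewrite eigenvalue_root_char charA root_prod_XsubC.
apply: oppr_inj; rewrite -char_poly_trace // -coefPn_prod_XsubC ?size_rs //.
by rewrite charA.
Qed.

Lemma complex_spectrum (R : rcfType) n (X : 'M[R]_n.+1) :
  exists rs : seq R[i], [/\ size rs = n.+1, \sum_(l <- rs) complex.Re l = \tr X &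
    forall l, complex_eigenvalue X l <-> l \in rs].
Proof.
have [rs [size_rs sum_rs eig_rs]] :=
  @closed_char_roots (R[i] : closedFieldType) _ (map_mx (fun x : R => x%:C%C) X).
exists rs; split=> //.
by rewrite -Re_sum sum_rs (trace_map_mx (real_complex R)).
Qed.

Section Averaging.
Variables (R : realDomainType) (T : eqType) (s : seq T) (F : T -> R).

Lemma sum_ge_size_has_ge1 :
  s != [::] -> (size s)%:R <= \sum_(x <- s) F x -> has (fun x => 1 <= F x) s.
Proof.
move=> s0; apply: contraTT => /hasPn F_lt1; rewrite -ltNge -sum1_size natr_sum.
rewrite [ltLHS]big_seq [ltRHS]big_seq; apply: ltr_sum => [|x /F_lt1].
  by case: s s0 {F_lt1} => // x t _; rewrite /= mem_head.
by rewrite -ltNge.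
Qed.

Lemma sum_ge_size_all_eq1 :
  (forall x, x \in s -> F x <= 1) -> (size s)%:R <= \sum_(x <- s) F x ->
  forall x, x \in s -> F x = 1.
Proof.
move=> F_le1; rewrite -sum1_size natr_sum => sumF.
have : \sum_(x <- s) (1 - F x) == 0.
  rewrite eq_le sumrB subr_le0 sumF /= -sumrB big_seq.
  by apply: sumr_ge0 => x /F_le1; rewrite subr_ge0.
rewrite big_seq (@psumr_eq0 _ _ s (mem s)) => [/allP F1 x xs|x /F_le1]; last first.
  by rewrite subr_ge0.
by apply/eqP; rewrite eq_sym -subr_eq0; have := F1 x xs; rewrite inE xs.
Qed.

End Averaging.

Lemma trace_ge_of_commutator_bound (R : numDomainType) n (A B X : 'M[R]_n) :
  (forall i j, (1%:M - X) i j <= (A *m B - B *m A) i j) -> n%:R <= \tr X.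
Proof.
move=> ABX; have : \tr (1%:M - X) <= \tr (A *m B - B *m A) by apply: ler_sum.
by rewrite !linearB /= mxtrace1 mxtrace_mulC subrr subr_le0.
Qed.

Lemma eigenvalue_Re_ge1 (R : rcfType) n (X : 'M[R]_n.+1) :
  n.+1%:R <= \tr X -> exists2 l, complex_eigenvalue X l & 1 <= complex.Re l.
Proof.
have [rs [size_rs <- eig_rs]] := complex_spectrum X.
rewrite -{1}size_rs => /sum_ge_size_has_ge1/hasP.
by rewrite -size_eq0 size_rs => /(_ isT)[l /eig_rs]; exists l.
Qed.

Lemma spectral_radius_ge (R : realType) n (X : 'M[R]_n.+1) l :
  complex_eigenvalue X l -> cmod l <= spectral_radius X.
Proof.
move=> Xl; have [rs [_ _ eig_rs]] := complex_spectrum X.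
apply: sup_upper_bound; last by exists l.
split; first by exists (cmod l), l.
exists (\sum_(r <- rs) cmod r) => _ [k /eig_rs k_rs <-].
by rewrite (big_rem k k_rs) /= lerDl sumr_ge0 // => r _; apply: sqrtr_ge0.
Qed.

Lemma eigenvalue_idempotent (F : fieldType) n (A : 'M[F]_n) a :
  A *m A = A -> eigenvalue A a -> a = 0 \/ a = 1.
Proof.
move=> AA /eigenvalueP[v vA v0].
have : (a ^+ 2 - a) *: v = 0.
  have vAA : v *m A *m A = a ^+ 2 *: v by rewrite vA -scalemxAl vA scalerA expr2.
  by rewrite scalerBl -vAA -mulmxA AA vA subrr.
move/eqP; rewrite scaler_eq0 (negbTE v0) orbF expr2 -[X in _ - X]mulr1 -mulrBr.
by rewrite mulf_eq0 subr_eq0 => /orP[]/eqP; [left | right].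
Qed.

Lemma eigenvalue0 (F : fieldType) n (A : 'M[F]_n) :
  eigenvalue A 0 = (A \notin unitmx).
Proof. by rewrite /eigenvalue /eigenspace raddf0 subr0 kermx_eq0 row_free_unit. Qed.

Lemma idempotent_unitmx (R : comUnitRingType) n (A : 'M[R]_n) :
  A \in unitmx -> A *m A = A -> A = 1%:M.
Proof. by move=> Au AA; rewrite -[A](mulKmx Au) AA mulVmx. Qed.

Lemma idempotent_trace_ge (R : rcfType) n (X : 'M[R]_n.+1) :
  n.+1%:R <= \tr X -> X *m X = X -> X = 1%:M.
Proof.
move=> trX XX; apply: idempotent_unitmx => //.
have [rs [size_rs sum_rs eig_rs]] := complex_spectrum X.
have eig01 l : l \in rs -> l = 0 \/ l = 1.
  by move/eig_rs; apply: eigenvalue_idempotent; rewrite -map_mxM XX.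
have Re1 : forall l, l \in rs -> complex.Re l = 1.
  apply: sum_ge_size_all_eq1; last by rewrite size_rs sum_rs.
  by move=> l /eig01[] ->.
rewrite -[_ \in _]negbK -eigenvalue0 -(eigenvalue_map (real_complex R)).
apply/negP; rewrite raddf0 => /eig_rs/Re1 /=.
by move/eqP; rewrite eq_sym oner_eq0.
Qed.

Lemma mx_entry_le_norm (R : realDomainType) m n (t : 'M[R]_(m, n)) i j :
  `|t i j| <= `|t|.
Proof.
rewrite [leRHS]/Num.norm /= mx_normrE; apply/bigmax_geP; right.
by exists (i, j).
Qed.

Section VectorNorm.
Variables (R : realType) (n : nat) (N : 'cV[R]_n -> R).
Hypothesis normN : is_vnorm N.

Lemma vnorm_ge0 v : 0 <= N v. Proof. by case: normN. Qed.

Lemma vnorm_eq0 v : N v = 0 -> v = 0. Proof. by case: normN => _ + _ _; apply. Qed.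

Lemma vnormZ a v : N (a *: v) = `|a| * N v. Proof. by case: normN. Qed.

Lemma vnormD u v : N (u + v) <= N u + N v. Proof. by case: normN. Qed.

Lemma vnorm0 : N 0 = 0.
Proof. by rewrite -(scale0r 0) vnormZ normr0 mul0r. Qed.

Lemma vnormN v : N (- v) = N v.
Proof. by rewrite -scaleN1r vnormZ normrN1 mul1r. Qed.

Lemma vnorm_gt0 v : v != 0 -> 0 < N v.
Proof.
by move=> v0; rewrite lt_def vnorm_ge0 andbT; apply: contra_neq v0 => /vnorm_eq0.
Qed.

Lemma vnorm_dist u v : `|N u - N v| <= N (u - v).
Proof.
have Nu : N u <= N v + N (u - v) by rewrite -[u in N u](subrK v) addrC vnormD.
have Nv : N v <= N u + N (u - v).
  by rewrite -[N (u - v)]vnormN opprB -[v in N v](subrK u) addrC vnormD.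
by rewrite ler_norml; apply/andP; split; lra.
Qed.

Lemma vnorm_sum I (r : seq I) (F : I -> 'cV_n) :
  N (\sum_(i <- r) F i) <= \sum_(i <- r) N (F i).
Proof.
elim/big_rec2: _ => [|i x y _ Nxy]; first by rewrite vnorm0.
by apply: le_trans (vnormD _ _) _; rewrite lerD2l.
Qed.

Lemma vnorm_mulmx_le k (X : 'M[R]_(n, k)) (v : 'cV[R]_k) :
  N (X *m v) <= \sum_j `|v j 0| * N (col j X).
Proof.
have -> : X *m v = \sum_j v j 0 *: col j X.
  apply/matrixP => i c; rewrite !mxE summxE; apply: eq_bigr => j _.
  by rewrite !mxE (ord1 c) mulrC.
by apply: le_trans (vnorm_sum _ _) _; apply: ler_sum => j _; rewrite vnormZ.
Qed.

Let K := \sum_j N (col j (1%:M : 'M[R]_n)).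

Lemma vnorm_tr_le_mx_norm (t : 'rV[R]_n) : N t^T <= `|t| * K.
Proof.
rewrite -[t^T]mul1mx; apply: le_trans (vnorm_mulmx_le _ _) _.
rewrite /K mulr_sumr; apply: ler_sum => j _; rewrite mxE.
by apply: ler_wpM2r; [exact: vnorm_ge0 | exact: mx_entry_le_norm].
Qed.

Lemma continuous_vnorm_tr : continuous (fun t : 'rV[R]_n => N t^T).
Proof.
move=> x; apply/cvgrPdist_lt; first exact: nbhs_filter.
move=> e e_gt0.
have K1 : 0 < K + 1 by rewrite ltr_wpDl // sumr_ge0 // => j _; apply: vnorm_ge0.
near=> y; apply: le_lt_trans (vnorm_dist _ _) _.
rewrite -linearB; apply: le_lt_trans (vnorm_tr_le_mx_norm _) _.
apply: (@le_lt_trans _ _ (`|x - y| * (K + 1))).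
  by apply: ler_wpM2l; rewrite ?lerDl.
rewrite -ltr_pdivlMr //; near: y.
by apply: cvgr_dist_lt; [exact: cvg_id | rewrite divr_gt0].
Unshelve. all: by end_near.
Qed.

(* N is bounded below on the compact unit sphere of the sup norm; this is the
   equivalence of norms in finite dimension. *)
Lemma vnorm_coord_le : (0 < n)%N ->
  exists2 c, 0 < c & forall (v : 'cV[R]_n) j, `|v j 0| <= c * N v.
Proof.
move=> n_gt0; pose S := [set t : 'rV[R]_n | `|t| = 1].
have unitS (t : 'rV[R]_n) : t != 0 -> S (`|t|^-1 *: t).
  by move=> t0; rewrite /S /= normrZ normfV normr_id mulVf // normr_eq0.
have S0 : S !=set0.
  exists (`|const_mx 1 : 'rV[R]_n|^-1 *: const_mx 1); apply: unitS.
  by apply/eqP => /matrixP/(_ 0 (Ordinal n_gt0))/eqP; rewrite !mxE oner_eq0.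
have compactS : compact S.
  have boundedS : [bounded t | t in S].
    by rewrite /bounded_near; near=> M => t /= ->; near: M; exact: nbhs_pinfty_ge.
  apply: bounded_closed_compact => //.
  rewrite -[S]/(Num.norm @^-1` [set 1]); apply: preimage_closed; last exact: closed_eq.
  by move=> t _; exact: norm_continuous.
have [t0 /set_mem St0 t0_min] :=
  compact_EVT_min S0 compactS (continuous_subspaceT continuous_vnorm_tr).
have Nt0 : 0 < N t0^T by rewrite vnorm_gt0 // trmx_eq0 -normr_gt0 St0 ltr01.
exists (N t0^T)^-1 => [|v j]; first by rewrite invr_gt0.
have [->|v0] := eqVneq v 0; first by rewrite vnorm0 mxE normr0 mulr0.
have vT_gt0 : 0 < `|v^T| by rewrite normr_gt0 trmx_eq0.
have Nv : N t0^T * `|v^T| <= N v.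
  have := t0_min _ (mem_set (unitS v^T _)); rewrite trmx_eq0 => /(_ v0).
  by rewrite linearZ /= trmxK vnormZ normfV normr_id mulrC ler_pdivlMr.
rewrite mulrC ler_pdivlMr //; apply: le_trans Nv; rewrite mulrC.
apply: ler_wpM2l; first exact: ltW.
by have := mx_entry_le_norm v^T 0 j; rewrite mxE.
Unshelve. all: by end_near.
Qed.

End VectorNorm.

Lemma unit_circle_norm_le1 (R : realDomainType) (p r : R) :
  p ^+ 2 + r ^+ 2 = 1 -> `|p| <= 1.
Proof.
move=> pr1; rewrite -(@expr_le1 _ 2) // real_normK ?num_real // -pr1.
by rewrite lerDl sqr_ge0.
Qed.

Lemma unit_circle_rotate (R : rcfType) (a b p' r' : R) :
  0 < a ^+ 2 + b ^+ 2 -> p' ^+ 2 + r' ^+ 2 = 1 ->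
  exists p r, [/\ p ^+ 2 + r ^+ 2 = 1,
    p * a + r * b = Num.sqrt (a ^+ 2 + b ^+ 2) * p' &
    r * a - p * b = Num.sqrt (a ^+ 2 + b ^+ 2) * r'].
Proof.
move=> ab_gt0 pr1; set m := Num.sqrt _.
have m0 : m != 0 by rewrite sqrtr_eq0 -ltNge.
have mm : a ^+ 2 + b ^+ 2 = m ^+ 2 by rewrite sqr_sqrtr ?ltW.
exists ((a * p' - b * r') / m), ((b * p' + a * r') / m); split.
- have -> : ((a * p' - b * r') / m) ^+ 2 + ((b * p' + a * r') / m) ^+ 2 =
      (a ^+ 2 + b ^+ 2) * (p' ^+ 2 + r' ^+ 2) / m ^+ 2 by field.
  by rewrite pr1 mulr1 mm divff // expf_neq0.
- have -> : (a * p' - b * r') / m * a + (b * p' + a * r') / m * b =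
      (a ^+ 2 + b ^+ 2) * p' / m by field.
  by rewrite mm; field.
- have -> : (b * p' + a * r') / m * a - (a * p' - b * r') / m * b =
      (a ^+ 2 + b ^+ 2) * r' / m by field.
  by rewrite mm; field.
Qed.

Section OperatorNorm.
Variables (R : realType) (n : nat) (N : 'cV[R]_n -> R) (X : 'M[R]_n).
Hypotheses (normN : is_vnorm N) (n_gt0 : (0 < n)%N).

Lemma has_sup_opnorm : has_sup [set N (X *m v) | v in [set v | N v <= 1]].
Proof.
split; first by exists (N (X *m 0)); exists 0; rewrite //= (vnorm0 normN).
have [c c_gt0 coord_le] := vnorm_coord_le normN n_gt0.
exists (\sum_j c * N (col j X)) => _ [v /= Nv1 <-].
apply: le_trans (vnorm_mulmx_le normN _ _) _; apply: ler_sum => j _.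
apply: ler_wpM2r; first exact: vnorm_ge0.
by apply: le_trans (coord_le v j) _; rewrite ler_piMr // ltW.
Qed.

Lemma opnorm_ge0 : 0 <= opnorm N X.
Proof.
apply: le_trans (sup_upper_bound has_sup_opnorm _); last first.
  by exists 0; rewrite //= (vnorm0 normN).
by rewrite mulmx0 (vnorm0 normN).
Qed.

Lemma opnorm_mulmx_le v : N (X *m v) <= opnorm N X * N v.
Proof.
have [->|v0] := eqVneq v 0; first by rewrite mulmx0 (vnorm0 normN) mulr0.
have Nv_gt0 := vnorm_gt0 normN v0.
have Nv_inv : `|(N v)^-1| = (N v)^-1 by rewrite ger0_norm // invr_ge0 ltW.
rewrite -ler_pdivrMr // mulrC -Nv_inv -(vnormZ normN) scalemxAr.
apply: sup_upper_bound; first exact: has_sup_opnorm.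
by exists ((N v)^-1 *: v); rewrite //= (vnormZ normN) Nv_inv mulVf ?gt_eqF.
Qed.

Let ellipse_norms (u v : 'cV[R]_n) :=
  [set N (pr.1 *: u + pr.2 *: v) | pr in [set pr : R * R | pr.1 ^+ 2 + pr.2 ^+ 2 = 1]].

Lemma has_sup_ellipse_norms u v : has_sup (ellipse_norms u v).
Proof.
split.
  by exists (N (1 *: u + 0 *: v)); exists (1, 0); rewrite //= expr1n expr0n addr0.
exists (N u + N v) => _ [[p r] /= pr1 <-].
apply: le_trans (vnormD normN _ _) _; rewrite !(vnormZ normN).
apply: lerD; apply: ler_piMl (vnorm_ge0 normN _) _.
  exact: unit_circle_norm_le1 pr1.
by apply: (@unit_circle_norm_le1 _ _ p); rewrite addrC.
Qed.

Lemma ellipse_norms_le_sup u v p r :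
  p ^+ 2 + r ^+ 2 = 1 -> N (p *: u + r *: v) <= sup (ellipse_norms u v).
Proof.
by move=> pr1; apply: sup_upper_bound; [exact: has_sup_ellipse_norms | exists (p, r)].
Qed.

Lemma sup_ellipse_norms_gt0 u v : u != 0 \/ v != 0 -> 0 < sup (ellipse_norms u v).
Proof.
case=> [u0|v0].
  apply: lt_le_trans (ellipse_norms_le_sup u v (_ : 1 ^+ 2 + 0 ^+ 2 = 1)).
    by rewrite scale1r scale0r addr0 (vnorm_gt0 normN).
  by rewrite expr1n expr0n addr0.
apply: lt_le_trans (ellipse_norms_le_sup u v (_ : 0 ^+ 2 + 1 ^+ 2 = 1)).
  by rewrite scale1r scale0r add0r (vnorm_gt0 normN).
by rewrite expr1n expr0n add0r.
Qed.

Lemma opnorm_ge_rotation (u v : 'cV[R]_n) (a b : R) :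
  X *m u = a *: u - b *: v -> X *m v = b *: u + a *: v -> u != 0 \/ v != 0 ->
  Num.sqrt (a ^+ 2 + b ^+ 2) <= opnorm N X.
Proof.
move=> Xu Xv uv0; set m := Num.sqrt _; set M := sup (ellipse_norms u v).
have [ab_gt0|] := ltP 0 (a ^+ 2 + b ^+ 2); last first.
  by move/ler0_sqrtr; rewrite -/m => ->; exact: opnorm_ge0.
have m_gt0 : 0 < m by rewrite sqrtr_gt0.
have M_gt0 : 0 < M by exact: sup_ellipse_norms_gt0.
have XY p r : X *m (p *: u + r *: v) = (p * a + r * b) *: u + (r * a - p * b) *: v.
  by rewrite mulmxDr -!scalemxAr Xu Xv; apply/matrixP => i j; rewrite !mxE; ring.
suff : M <= opnorm N X * M / m by rewrite ler_pdivlMr // mulrC ler_pM2r.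
apply: ge_sup; first by case: (has_sup_ellipse_norms u v).
move=> _ [[p' r'] /= pr1 <-]; rewrite ler_pdivlMr // mulrC.
have [p [r [pr1' ap br]]] := unit_circle_rotate ab_gt0 pr1.
rewrite -[m](ger0_norm (ltW m_gt0)) -(vnormZ normN) scalerDr !scalerA -ap -br -XY.
apply: le_trans (opnorm_mulmx_le _) _; apply: ler_wpM2l; first exact: opnorm_ge0.
exact: ellipse_norms_le_sup.
Qed.

End OperatorNorm.

Lemma opnorm_ge_eigenvalue (R : realType) n (N : 'cV[R]_n.+1 -> R)
    (X : 'M[R]_n.+1) (w : 'cV[R[i]]_n.+1) (l : R[i]) :
  is_vnorm N -> map_mx (fun x : R => x%:C%C) X *m w = l *: w -> w != 0 ->
  cmod l <= opnorm N X.
Proof.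
move=> normN Xw w0.
set u := map_mx (@complex.Re R) w; set v := map_mx (@complex.Im R) w.
apply: (opnorm_ge_rotation normN isT (u := u) (v := v)).
- rewrite /u -map_Re_mulmx Xw; apply/matrixP => i j.
  by rewrite !mxE Re_mul.
- rewrite /v -map_Im_mulmx Xw; apply/matrixP => i j.
  by rewrite !mxE Im_mul addrC.
- have [u0|] := eqVneq u 0; last by left.
  have [v0|] := eqVneq v 0; last by right.
  case/eqP: w0; apply/matrixP => i j.
  move/matrixP: u0 => /(_ i j); move/matrixP: v0 => /(_ i j); rewrite !mxE.
  by case: (w i j) => a b /= -> ->.
Qed.

Theorem proposition4p4 (R : realType) (n : nat) (A B X : 'M[R]_n.+1) :
  (forall i j, (1%:M - X) i j <= (A *m B - B *m A) i j) ->
  [/\ (n.+1)%:R <= \tr X,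
      1 <= spectral_radius X,
      (forall N : 'cV[R]_n.+1 -> R, is_vnorm N -> 1 <= opnorm N X)
    & (X *m X = X -> X = 1%:M)].
Proof.
move=> ABX; have trX := trace_ge_of_commutator_bound ABX.
split=> //; last exact: idempotent_trace_ge.
- have [l Xl Rel] := eigenvalue_Re_ge1 trX.
  exact: le_trans Rel (le_trans (Re_le_cmod l) (spectral_radius_ge Xl)).
- move=> N normN; have trXT : n.+1%:R <= \tr X^T by rewrite mxtrace_tr.
  have [l /eigenvector_of_complex_eigenvalue_tr[w Xw w0] Rel] :=
    eigenvalue_Re_ge1 trXT.
  exact: le_trans Rel (le_trans (Re_le_cmod l) (opnorm_ge_eigenvalue normN Xw w0)).
Qed.
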